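(* Let $G_1$ and $G_2$ be two vertex-disjoint 2-edge-colored graphs with Hamiltonian alternating cycles $C_1=x_0x_1\cdots x_{2n-1}x_0$ and $C_2=y_0y_1\cdots y_{2m-1}y_0$, respectively, and let $G\in G_1\oplus G_2$. Suppose there is no good pair in $G$ (between $C_1$ and $C_2$), and that for each $i\in\{1,2\}$ there is a vertex of $C_i$ which is non-singular with respect to $C_{3-i}$. Let $m_1=\min\{n,m\}$ and $M_2=\max\{n,m\}$. Then for each vertex $v\in V(G)$ and each even integer $\ell\in[4m_1,2M_2]$, there is an alternating cycle of length $\ell$ in $G$ passing through $v$.
   Context: All graphs are simple, with edges colored red or blue. An alternating cycle is a cycle in which consecutive edges have different colors; a Hamiltonian alternating cycle of a graph is an alternating cycle through all its vertices. For vertex-disjoint 2-edge-colored graphs $G_1,G_2$, the colored generalized sum $G_1\oplus G_2$ is the set of 2-edge-colored graphs $G$ with $V(G)=V(G_1)\cup V(G_2)$, $G\langle V(G_i)\rangle=G_i$ with the same coloring, and exactly one edge (of arbitrary fixed color) between each $u\in V(G_1)$ and $w\in V(G_2)$; these latter edges are the exterior edges. For $v$ on an alternating cycle $C$, $v^r$ (resp. $v^b$) is the neighbor of $v$ on $C$ with $vv^r$ red (resp. $vv^b$ blue). For an exterior edge $vw$ with $v\in V(C_1)$, $w\in V(C_2)$: if $vw$ is red, $vw,v^rw^r$ is a good pair if $v^rw^r$ is red; if $vw$ is blue, $vw,v^bw^b$ is a good pair if $v^bw^b$ is blue. A vertex $v\in V(C_i)$ is singular with respect to $C_{3-i}$ if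 all edges between $v$ and $V(C_{3-i})$ have the same color, and non-singular otherwise. For integers $a\le b$, $[a,b]=\{a,a+1,\dots,b\}$. *)

From mathcomp Require Import all_boot.
Set Implicit Arguments. Unset Strict Implicit. Unset Printing Implicit Defensive.

Section AltCycles.
Variable T : finType.

(* A simple graph on T: adjacency relation [adj] (assumed symmetric and
   irreflexive in the theorem); edge colours [col x y] with true = red,
   false = blue (only meaningful on edges). *)
Definition simple_graph (adj : rel T) : Prop :=
  (forall x y, adj x y = adj y x) /\ (forall x, ~~ adj x x).

Definition sym_coloring (adj : rel T) (col : T -> T -> bool) : Prop :=
  forall x y, adj x y -> col x y = col y x.

(* An alternating cycle, given as the cyclic sequence of its (distinct)
   vertices; [next s] is the cyclic successor in s (path.v). *)
Definition alt_cycle (adj : rel T) (col : T -> T -> bool) (s : seq T) : bool :=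
  [&& uniq s, 2 < size s,
      all (fun v => adj v (next s v)) s &
      all (fun v => col v (next s v) != col (next s v) (next s (next s v))) s].

(* v^c : the neighbour of v on the cycle s joined to v by an edge of colour c
   (c = true gives v^r, c = false gives v^b). *)
Definition cnbr (col : T -> T -> bool) (s : seq T) (v : T) (c : bool) : T :=
  if col v (next s v) == c then next s v else prev s v.

(* There is a good pair between C1 and C2: an exterior edge vw of colour c
   such that v^c w^c also has colour c. *)
Definition has_good_pair (col : T -> T -> bool) (C1 C2 : seq T) : Prop :=
  exists v w, [/\ v \in C1, w \in C2 &
    col (cnbr col C1 v (col v w)) (cnbr col C2 w (col v w)) = col v w].

Definition non_singular (col : T -> T -> bool) (v : T) (C : seq T) : Prop :=
  exists w1 w2, [/\ w1 \in C, w2 \in C & col v w1 != col v w2].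

End AltCycles.

From mathcomp Require Import all_boot zify.
From Stdlib Require Import Classical_Prop.
Set Implicit Arguments. Unset Strict Implicit. Unset Printing Implicit Defensive.

(* Index C1 and C2 periodically by X and Y so that the cycle edges X i X (i+1)
   and Y j Y (j+1) are red exactly for even i and j, and say that the exterior
   edge X i Y j agrees when it has the colour of X i X (i+1).  The absence of
   good pairs makes agreement propagate from (i, j+1) to (i+1, j) whenever i
   and j have the same parity; by periodicity this implication is an
   equivalence, so on index pairs of opposite parity agreement only depends on
   i + j modulo |C1|.  If it is not constant there, some odd s has agreement
   at sum s but not at s + 2, and then X a ... X (a+p) Y c ... Y (c+q) is an
   alternating cycle whenever a + p + c = s and q = p + 2 modulo |C1|; these
   parameters reach every even length from 6 to |C2| through any vertex.
   Reversing C2 swaps the two parity classes, so if agreement is constant on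
   opposite-parity pairs for both orientations of C2, it only depends on the
   parities of i and j; then a non-singular vertex of C1 forces every vertex
   of C2 to be singular. *)

Lemma periodic_monotone_const (b : nat -> bool) P : 0 < P ->
  (forall k, b (k + P) = b k) -> (forall k, b k -> b k.+1) -> forall k, b k = b 0.
Proof.
move=> P_gt0 bP b_mono.
have b_up k d : b k -> b (k + d).
  by elim: d => [|d IHd]; rewrite ?addn0 ?addnS // => /IHd /b_mono.
elim=> // k IHk; rewrite -IHk; apply/idP/idP => [bk1|]; last exact: b_mono.
by rewrite -bP; move: (b_up _ P.-1 bk1); rewrite addSnnS prednK.
Qed.

Lemma next_mkseq (T : eqType) (z : nat -> T) L k :
  {in gtn L &, injective z} -> k < L -> next (mkseq z L) (z k) = z (k.+1 %% L).
Proof.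
move=> z_inj kL; have uz : uniq (mkseq z L).
  by rewrite map_inj_in_uniq ?iota_uniq // => i j; rewrite !mem_iota; apply: z_inj.
have idx : index (z k) (mkseq z L) = k.
  by rewrite -[z k](nth_mkseq (z 0) z kL) index_uniq ?size_mkseq.
have zk_in : z k \in mkseq z L by rewrite -index_mem idx size_mkseq.
rewrite next_nth zk_in idx; case: L kL {uz idx zk_in z_inj} => // L kL /=.
have [kL'|Lk] := ltnP k L; first by rewrite modn_small // (nth_map 0) ?size_iota ?nth_iota.
have -> : k = L by lia.
by rewrite modnn nth_default ?size_map ?size_iota.
Qed.

Lemma eq_iter_mod_order (T : finType) (f : T -> T) x i j : injective f ->
  (iter i f x == iter j f x) = (i == j %[mod order f x]).
Proof.
move=> f_inj; have iter_mod k : iter k f x = iter (k %% order f x) f x.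
  rewrite {1}(divn_eq k (order f x)) addnC iterD; congr iter.
  by elim: (k %/ _) => //= q IHq; rewrite mulSn iterD IHq iter_order.
have lt_mod k : k %% order f x < order f x by rewrite ltn_pmod ?order_gt0.
rewrite iter_mod [iter j f x]iter_mod; apply/eqP/eqP => [eq_ij | ->] //.
by rewrite -(findex_iter (lt_mod i)) eq_ij findex_iter.
Qed.

Section AlternatingCycles.
Variables (T : finType) (adj : rel T) (col : T -> T -> bool).
Hypothesis adj_sym : forall x y, adj x y = adj y x.
Hypothesis col_sym : forall x y, adj x y -> col x y = col y x.

Record cycle_param (C : seq T) (z : nat -> T) : Prop := CycleParam {
  param_eq : forall i j, (z i == z j) = (i == j %[mod size C]);
  param_mem : forall i, z i \in C;
  param_onto : forall v, v \in C -> exists i, v = z i;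
  param_next : forall i, next C (z i) = z i.+1;
  param_col : forall i, col (z i) (z i.+1) = ~~ odd i }.

Section OneCycle.
Variable C : seq T.
Hypothesis altC : alt_cycle adj col C.

Lemma alt_cycle_uniq : uniq C.
Proof. by case/and4P: altC. Qed.

Lemma adj_next v : v \in C -> adj v (next C v).
Proof. by case/and4P: altC => _ _ /allP adjC _; apply: adjC. Qed.

Lemma adj_prev v : v \in C -> adj (prev C v) v.
Proof. by move=> vC; rewrite -{2}[v](next_prev alt_cycle_uniq) adj_next ?mem_prev. Qed.

Lemma col_next_next v : v \in C ->
  col (next C v) (next C (next C v)) = ~~ col v (next C v).
Proof.
by case/and4P: altC => _ _ _ /allP colC /colC; case: col; case: col.
Qed.

Lemma col_prev v : v \in C -> col v (prev C v) = ~~ col v (next C v).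
Proof.
move=> vC; have pvC : prev C v \in C by rewrite mem_prev.
have := col_next_next pvC; rewrite next_prev ?alt_cycle_uniq // => ->.
by rewrite negbK (col_sym (adj_prev vC)).
Qed.

Lemma cnbr_next v : v \in C ->
  cnbr col C (next C v) (col v (next C v)) = v.
Proof.
move=> vC; rewrite /cnbr col_next_next //.
by case: (col _ _) => /=; rewrite prev_next ?alt_cycle_uniq.
Qed.

Lemma cnbr_rev v c : v \in C -> cnbr col (rev C) v c = cnbr col C v c.
Proof.
move=> vC; rewrite /cnbr next_rev ?prev_rev ?alt_cycle_uniq // col_prev //.
by case: (col _ _); case: c.
Qed.

Lemma alt_cycle_rev : alt_cycle adj col (rev C).
Proof.
have uC := alt_cycle_uniq; apply/and4P; split; rewrite ?rev_uniq ?size_rev //.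
- by case/and4P: altC.
- by apply/allP => v; rewrite mem_rev => vC; rewrite next_rev // adj_sym adj_prev.
- apply/allP => v; rewrite mem_rev => vC; rewrite !next_rev //.
  rewrite [col (prev C v) _]col_prev ?mem_prev // next_prev //.
  by rewrite (col_sym (adj_prev vC)); case: col.
Qed.

Lemma exists_cycle_param : exists z, cycle_param C z.
Proof.
have uC := alt_cycle_uniq.
have [x0 x0C] : exists x0, x0 \in C.
  by case/and4P: altC; case: C => // x0 s _ _ _ _; exists x0; rewrite mem_head.
pose x := if col x0 (next C x0) then x0 else next C x0.
have xC : x \in C by rewrite /x; case: ifP; rewrite ?mem_next.
have order_x : order (next C) x = size C := order_cycle (cycle_next uC) uC xC.
have zC i : iter i (next C) x \in C by elim: i => //= i; rewrite mem_next.
exists (fun i => iter i (next C) x); split => //.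
- by move=> i j; rewrite eq_iter_mod_order ?order_x //; apply: can_inj (prev_next uC).
- move=> v; rewrite -(fconnect_cycle (cycle_next uC) xC) => /iter_findex <-.
  by exists (findex (next C) x v).
- elim=> [|i IHi] /=; last by rewrite col_next_next // IHi.
  by rewrite /x; case: ifP => // x0_blue; rewrite col_next_next // x0_blue.
Qed.

End OneCycle.

Section Param.
Variables (C : seq T) (z : nat -> T).
Hypothesis pz : cycle_param C z.

Lemma param_periodic i k : z (i + k * size C) = z i.
Proof. by apply/eqP; rewrite (param_eq pz) addnC modnMDl. Qed.

Lemma param_injD a i j : i < size C -> j < size C -> z (a + i) = z (a + j) -> i = j.
Proof. by move=> iC jC /eqP; rewrite (param_eq pz) eqn_modDl !modn_small // => /eqP. Qed.

Lemma param_size_gt0 : 0 < size C.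
Proof. by case: C (param_mem pz 0). Qed.

Lemma param_size_even : ~~ odd (size C).
Proof.
have zN i : z (i + size C) = z i by apply/eqP; rewrite (param_eq pz) modnDr.
by rewrite -[size C]add0n -(param_col pz) -addSn !zN (param_col pz).
Qed.

Lemma param_adj i : alt_cycle adj col C -> adj (z i) (z i.+1).
Proof. by move=> altC; rewrite -(param_next pz) adj_next ?(param_mem pz). Qed.

End Param.

Lemma alt_cycle_mkseq (z : nat -> T) L a : 2 < L -> ~~ odd L ->
    {in gtn L &, injective z} ->
    (forall k, k < L -> adj (z k) (z (k.+1 %% L))) ->
    (forall k, k < L -> col (z k) (z (k.+1 %% L)) = ~~ odd (a + k)) ->
  alt_cycle adj col (mkseq z L).
Proof.
move=> L_gt2 L_even z_inj z_adj z_col.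
have modS_lt k : k.+1 %% L < L by rewrite ltn_pmod //; lia.
have oddS_mod k : k < L -> odd (k.+1 %% L) = ~~ odd k.
  move=> kL; have [kL1|] := ltnP k.+1 L; first by rewrite modn_small.
  by move=> Lk; rewrite (_ : k.+1 = L) ?modnn //; lia.
have mem_z v : v \in mkseq z L -> exists2 k, k < L & v = z k.
  by case/mapP => k; rewrite mem_iota => /andP[_ kL] ->; exists k.
apply/and4P; split; rewrite ?size_mkseq //.
- by rewrite map_inj_in_uniq ?iota_uniq // => i j; rewrite !mem_iota; apply: z_inj.
- by apply/allP => _ /mem_z[k kL ->]; rewrite next_mkseq ?z_adj.
apply/allP => _ /mem_z[k kL ->]; rewrite !next_mkseq // !z_col //.
by rewrite !oddD oddS_mod //; case: odd; case: odd.
Qed.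

Section Exterior.
Variables (C1 C2 : seq T) (X Y : nat -> T).
Hypotheses (alt1 : alt_cycle adj col C1) (alt2 : alt_cycle adj col C2).
Hypotheses (pX : cycle_param C1 X) (pY : cycle_param C2 Y).
Hypothesis ext_adj : forall u w, u \in C1 -> w \in C2 -> adj u w.
Hypothesis no_good_pair : ~ has_good_pair col C1 C2.
Local Notation N := (size C1).
Local Notation M := (size C2).

Definition agree i j := col (X i) (Y j) == col (X i) (X i.+1).

Definition agree_flip s := [&& odd s, agree s 0 & ~~ agree s.+2 0].

Lemma agreeDl i j k : agree (i + k * N) j = agree i j.
Proof. by rewrite /agree -addSn !(param_periodic pX). Qed.

Lemma agreeDr i j k : agree i (j + k * M) = agree i j.
Proof. by rewrite /agree (param_periodic pY). Qed.

Lemma agree_antidiag_step i j : odd i = odd j -> agree i j.+1 -> agree i.+1 j.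
Proof.
move=> ij /eqP; rewrite (param_col pX) => col_ij.
suff : col (X i.+1) (Y j) != ~~ odd i.
  by rewrite /agree (param_col pX) /=; case: col; case: odd.
apply/negP => /eqP col_i1j; apply: no_good_pair.
exists (X i), (Y j.+1); split; rewrite ?(param_mem pX) ?(param_mem pY) // col_ij.
have -> : cnbr col C1 (X i) (~~ odd i) = X i.+1.
  by rewrite /cnbr (param_next pX) (param_col pX) eqxx.
have -> : cnbr col C2 (Y j.+1) (~~ odd i) = Y j.
  by rewrite ij -(param_col pY) -(param_next pY) cnbr_next ?(param_mem pY).
exact: col_i1j.
Qed.

Lemma agree_antidiag i j : odd i = odd j -> agree i j.+1 = agree i.+1 j.
Proof.
move=> ij; have M_gt0 := param_size_gt0 pY; have M_even := param_size_even pY.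
(* [j + k * M.-1] is [j - k] modulo [M]. *)
pose b k := agree (i + k) (j + k * M.-1).+1.
have bP k : b (k + N * M) = b k.
  rewrite /b -[RHS](agreeDl _ _ M) -[RHS](agreeDr _ _ (N * M.-1)).
  by congr agree; nia.
have b_mono k : b k -> b k.+1.
  have odd_b : odd (i + k) = odd (j + k * M.-1).
    by rewrite !oddD oddM (_ : odd M.-1) ?ij //; lia.
  rewrite /b => /(agree_antidiag_step odd_b); rewrite addnS -(agreeDr _ _ 1).
  by congr agree; rewrite mulSn; lia.
have := periodic_monotone_const _ bP b_mono 1.
rewrite /b addn0 addn1 mul0n addn0 mul1n -(agreeDr _ j 1) => <-; first by congr agree; lia.
by rewrite muln_gt0 M_gt0 (param_size_gt0 pX).
Qed.

Lemma agree_sum i j : odd i != odd j -> agree i j = agree (i + j) 0.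
Proof.
elim: j i => [|j IHj] i ij; first by rewrite addn0.
by rewrite agree_antidiag ?IHj ?addSnnS //; lia.
Qed.

Lemma agree_mixed_const : ~ (exists s, agree_flip s) ->
  forall i j, odd i != odd j -> agree i j = agree 1 0.
Proof.
move=> no_flip i j ij; have N_even := param_size_even pX.
pose b t := agree t.*2.+1 0.
have bP t : b (t + N./2) = b t.
  by rewrite /b -[RHS](agreeDl _ _ 1); congr agree; lia.
have b_mono t : b t -> b t.+1.
  rewrite /b => bt; apply/negPn/negP => nbt; apply: no_flip.
  by exists t.*2.+1; rewrite /agree_flip /= odd_double bt -doubleS.
have N2_gt0 : 0 < N./2 by have := param_size_gt0 pX; lia.
rewrite agree_sum // (_ : i + j = (i + j)./2.*2.+1); last by lia.
exact: periodic_monotone_const N2_gt0 bP b_mono _.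
Qed.

Lemma agree_parity_singular c_mixed c_same :
    (forall i j, agree i j = if odd i == odd j then c_same else c_mixed) ->
    (exists v, v \in C1 /\ non_singular col v C2) ->
    (exists v, v \in C2 /\ non_singular col v C1) -> False.
Proof.
move=> agreeE [? [/(param_onto pX)[i ->] [? [? []]]]].
move=> /(param_onto pY)[j1 ->] /(param_onto pY)[j2 ->] row.
move=> [? [/(param_onto pY)[j ->] [? [? []]]]].
move=> /(param_onto pX)[i1 ->] /(param_onto pX)[i2 ->] column.
have colE a b : col (X a) (Y b) = ((if odd a == odd b then c_same else c_mixed) == ~~ odd a).
  by rewrite -agreeE /agree (param_col pX); case: col; case: odd.
move: column row; rewrite -!(col_sym (ext_adj (param_mem pX _) (param_mem pY _))).
rewrite !colE; clear colE agreeE.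
by case: (odd i); case: (odd j1); case: (odd j2); case: (odd j); case: (odd i1);
  case: (odd i2); case: c_same; case: c_mixed.
Qed.

Hypothesis disj : [disjoint C1 & C2].

Section Splice.
Variables (a c p q : nat).
Hypotheses (p_gt0 : 0 < p) (pN : p < N) (qM : q < M).

Definition splice k := if k <= p then X (a + k) else Y (c + (k - p.+1)).

Lemma spliceX k : k <= p -> splice k = X (a + k).
Proof. by rewrite /splice => ->. Qed.

Lemma spliceY k : p < k -> splice k = Y (c + (k - p.+1)).
Proof. by move=> pk; rewrite /splice leqNgt pk. Qed.

Lemma splice_inj : {in gtn (p + q + 2) &, injective splice}.
Proof.
have XY i j : X i != Y j.
  by apply: contraTneq (param_mem pY j) => <-; rewrite (disjointFr disj) ?(param_mem pX).
move=> i j; rewrite !inE => iL jL.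
have [ip|ip] := leqP i p; have [jp|jp] := leqP j p.
- by rewrite !spliceX // => /(param_injD pX); apply; lia.
- by rewrite spliceX // spliceY // => /eqP; rewrite (negbTE (XY _ _)).
- by rewrite spliceY // spliceX // => /esym/eqP; rewrite (negbTE (XY _ _)).
- rewrite !spliceY // => /(param_injD pY) eq_ij.
  suff : i - p.+1 = j - p.+1 by lia.
  by apply: eq_ij; lia.
Qed.

Hypotheses (pq : ~~ odd (p + q)) (apc : odd (a + p + c)).
Hypotheses (agree_p : agree (a + p) c) (agree_q : ~~ agree a (c + q)).

Lemma splice_edge k : k < p + q + 2 ->
  let k' := k.+1 %% (p + q + 2) in
  adj (splice k) (splice k') /\ col (splice k) (splice k') = ~~ odd (a + k).
Proof.
move=> kL k'; rewrite {}/k'.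
have [kp|pk] := ltnP k p.
  rewrite modn_small; last by lia.
  by rewrite !spliceX ?(ltnW kp) // addnS (param_col pX) (param_adj pX _ alt1).
have [->|pk'] := eqVneq k p.
  rewrite modn_small; last by lia.
  rewrite spliceX // spliceY // subnn addn0 ext_adj ?(param_mem pX) ?(param_mem pY) //.
  by move/eqP: agree_p; rewrite (param_col pX).
have [kL'|Lk] := ltnP k.+1 (p + q + 2).
  rewrite modn_small // !spliceY; try lia.
  rewrite (_ : k.+1 - p.+1 = (k - p.+1).+1); last by lia.
  by rewrite addnS (param_col pY) (param_adj pY _ alt2); split => //; lia.
rewrite (_ : k.+1 = p + q + 2) ?modnn; last by lia.
rewrite (spliceX (k := 0)) // addn0 (spliceY (k := k)); last by lia.
rewrite (_ : k - p.+1 = q); last by lia.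
rewrite -(col_sym (ext_adj (param_mem pX _) (param_mem pY _))) adj_sym.
have col_q : col (X a) (Y (c + q)) = odd a.
  by move: agree_q; rewrite /agree (param_col pX); case: col; case: odd.
by rewrite ext_adj ?(param_mem pX) ?(param_mem pY) // col_q; split => //; lia.
Qed.

End Splice.

Lemma alt_cycle_of_agree a c p q : 0 < p < N -> 0 < q < M -> ~~ odd (p + q) ->
    odd (a + p + c) -> agree (a + p) c -> ~~ agree a (c + q) ->
  exists s, [/\ alt_cycle adj col s, size s = p + q + 2, X a \in s & Y c \in s].
Proof.
move=> /andP[p_gt0 pN] /andP[q_gt0 qM] pq apc agree_p agree_q.
have edge k := @splice_edge a c p q p_gt0 pN qM pq apc agree_p agree_q k.
exists (mkseq (splice a c p) (p + q + 2)); split.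
- apply: alt_cycle_mkseq (splice_inj p_gt0 pN qM) (fun k kL => (edge k kL).1)
    (fun k kL => (edge k kL).2); lia.
- by rewrite size_mkseq.
- by apply/mapP; exists 0; rewrite ?mem_iota ?spliceX ?addn0 //; lia.
- by apply/mapP; exists p.+1; rewrite ?mem_iota ?spliceY ?subnn ?addn0 //; lia.
Qed.

Lemma alt_cycles_of_flip s0 : agree_flip s0 ->
  forall v l, (v \in C1) || (v \in C2) -> ~~ odd l -> 6 <= l <= M ->
  exists s, [/\ alt_cycle adj col s, size s = l & v \in s].
Proof.
move=> /and3P[s0_odd agree_s0 agree_s2] v l vC l_even /andP[l_ge6 l_leM].
have N_gt0 := param_size_gt0 pX; have N_even := param_size_even pX.
(* l = 2 p + 4 + K N with 0 < p <= N/2; with q := p + 2 + K N the two exterior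
   edges of the cycle have index sums s0 and s0 + 2 modulo N. *)
pose h := l./2 - 3; pose p := h %% N./2 + 1; pose K := h %/ N./2.
have p_lt : h %% N./2 < N./2 by rewrite ltn_pmod //; lia.
have hE : h = K * N./2 + h %% N./2 := divn_eq h N./2.
have build a c k : a + p + c = s0 + k * N ->
    exists s, [/\ alt_cycle adj col s, size s = l, X a \in s & Y c \in s].
  move=> apc; have odd_KN : ~~ odd (K * N) by rewrite oddM (negbTE N_even) andbF.
  have odd_apc : odd (a + p + c) by rewrite apc oddD oddM (negbTE N_even) andbF addbF.
  have [||||||s [s_alt s_size Xa Yc]] := @alt_cycle_of_agree a c p (p + 2 + K * N).
  - by rewrite /p; lia.
  - by rewrite /p; lia.
  - by lia.
  - exact: odd_apc.
  - by rewrite agree_sum ?apc ?agreeDl //; lia.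
  - rewrite agree_sum; last by lia.
    rewrite (_ : a + _ = s0.+2 + (k + K) * N) ?agreeDl //.
    by rewrite mulnDl; lia.
  by exists s; split => //; rewrite s_size /p; lia.
case/orP: vC => [/(param_onto pX)[i ->] | /(param_onto pY)[i ->]].
- have [|s [? ? ? _]] := build i (s0 + (i + p) * N.-1) (i + p); last by exists s.
  by rewrite -[in RHS](prednK N_gt0) mulnS; lia.
- have [|s [? ? _ ?]] := build (s0 + i * N.-1 + N - p) i i.+1; last by exists s.
  have p_le : p <= N by rewrite /p; lia.
  by rewrite mulSn -[in RHS](prednK N_gt0) mulnS; move: (i * N.-1) => t; lia.
Qed.

End Exterior.

Lemma cnbr_mem C v c : v \in C -> cnbr col C v c \in C.
Proof. by move=> vC; rewrite /cnbr; case: ifP; rewrite ?mem_next ?mem_prev. Qed.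

Lemma has_good_pair_rev C1 C2 : alt_cycle adj col C2 ->
  has_good_pair col C1 (rev C2) -> has_good_pair col C1 C2.
Proof.
move=> alt2 [v [w [vC1 wC2 good]]]; rewrite mem_rev in wC2.
by exists v, w; rewrite -(cnbr_rev alt2 _ wC2).
Qed.

Lemma has_good_pair_sym C1 C2 : (forall u w, u \in C1 -> w \in C2 -> adj u w) ->
  has_good_pair col C2 C1 -> has_good_pair col C1 C2.
Proof.
move=> ext_adj [w [u [wC2 uC1 good]]]; exists u, w; split => //.
rewrite (col_sym (ext_adj _ _ uC1 wC2)) col_sym ?ext_adj ?cnbr_mem //.
Qed.

Lemma param_rev_odd C z z' a b : alt_cycle adj col C ->
  cycle_param C z -> cycle_param (rev C) z' -> z a = z' b -> odd b = ~~ odd a.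
Proof.
move=> altC pz pz' zab; have := param_col pz' b.
rewrite -(param_next pz') next_rev ?alt_cycle_uniq // -zab col_prev ?(param_mem pz) //.
by rewrite (param_next pz) (param_col pz); case: odd; case: odd.
Qed.

Lemma alt_cycles_through C1 C2 :
    [disjoint C1 & C2] -> alt_cycle adj col C1 -> alt_cycle adj col C2 ->
    (forall u w, u \in C1 -> w \in C2 -> adj u w) ->
    ~ has_good_pair col C1 C2 ->
    (exists v, v \in C1 /\ non_singular col v C2) ->
    (exists v, v \in C2 /\ non_singular col v C1) ->
  forall v l, (v \in C1) || (v \in C2) -> ~~ odd l -> 6 <= l <= size C2 ->
  exists s, [/\ alt_cycle adj col s, size s = l & v \in s].
Proof.
move=> disj alt1 alt2 ext_adj no_gp ns1 ns2 v l vC l_even l_bounds.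
have alt2r := alt_cycle_rev alt2.
have ext_adj_r u w : u \in C1 -> w \in rev C2 -> adj u w.
  by rewrite mem_rev; apply: ext_adj.
have no_gp_r : ~ has_good_pair col C1 (rev C2) by move/(has_good_pair_rev alt2).
have [X pX] := exists_cycle_param alt1.
have [Y pY] := exists_cycle_param alt2.
have [Y' pY'] := exists_cycle_param alt2r.
have [[s0 flip] | no_flip] := classic (exists s, agree_flip X Y s).
  exact: (alt_cycles_of_flip alt1 alt2 pX pY ext_adj no_gp disj flip).
have [[s0 flip] | no_flip'] := classic (exists s, agree_flip X Y' s).
  apply: (alt_cycles_of_flip alt1 alt2r pX pY' ext_adj_r no_gp_r _ flip);
    by rewrite ?mem_rev ?size_rev // (eq_disjoint_r (mem_rev C2)).
exfalso; apply: (agree_parity_singular (c_mixed := agree X Y 1 0) (c_same := agree X Y' 1 0)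
  pX pY ext_adj _ ns1 ns2) => i j.
have [ij|ij] := eqVneq (odd i) (odd j); last first.
  exact: (agree_mixed_const alt1 alt2 pX pY no_gp no_flip).
have [j' Yj] : exists j', Y j = Y' j'.
  by apply: (param_onto pY'); rewrite mem_rev (param_mem pY).
have odd_j' := param_rev_odd alt2 pY pY' Yj.
rewrite /agree Yj -/(agree X Y' i j').
by rewrite (agree_mixed_const alt1 alt2r pX pY' no_gp_r no_flip') //; lia.
Qed.

End AlternatingCycles.

Unset Implicit Arguments.

Theorem proposition3p12 (T : finType) (adj : rel T) (col : T -> T -> bool)
    (C1 C2 : seq T) (n m : nat) :
  simple_graph adj -> sym_coloring adj col ->
  (* V(G) = V(G1) u V(G2), disjoint, with C1, C2 Hamiltonian alternating
     cycles of G1 = G<V(C1)>, G2 = G<V(C2)> *)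
  [disjoint C1 & C2] -> (forall x : T, (x \in C1) || (x \in C2)) ->
  alt_cycle adj col C1 -> alt_cycle adj col C2 ->
  size C1 = (2 * n)%N -> size C2 = (2 * m)%N ->
  (* G in G1 (+) G2 : every pair (u, w) in V(G1) x V(G2) is an edge *)
  (forall u w, u \in C1 -> w \in C2 -> adj u w) ->
  ~ has_good_pair col C1 C2 ->
  (exists v, v \in C1 /\ non_singular col v C2) ->
  (exists v, v \in C2 /\ non_singular col v C1) ->
  forall (v : T) (l : nat), ~~ odd l ->
    (4 * minn n m <= l <= 2 * maxn n m)%N ->
    exists s : seq T, [/\ alt_cycle adj col s, size s = l & v \in s].
Proof.
move=> [adj_sym _] col_sym disj cover alt1 alt2 size1 size2 ext_adj no_gp ns1 ns2 v l.
have: 2 < size C1 /\ 2 < size C2 by case/and4P: alt1 => _ ? _ _; case/and4P: alt2.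
rewrite size1 size2 => -[n_gt1 m_gt1] l_even l_bounds.
have [nm|mn] := leqP n m.
  apply: (alt_cycles_through adj_sym col_sym disj alt1 alt2 ext_adj no_gp ns1 ns2);
    by rewrite ?cover ?size2 //; lia.
have ext_adj' u w : u \in C2 -> w \in C1 -> adj u w by rewrite adj_sym => *; apply: ext_adj.
apply: (alt_cycles_through adj_sym col_sym _ alt2 alt1 ext_adj' _ ns2 ns1).
- by rewrite disjoint_sym.
- exact: contra_not (has_good_pair_sym col_sym ext_adj) no_gp.
- by rewrite orbC cover.
- by [].
- by rewrite size1; lia.
Qed.
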